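(* Let $p$ be a prime, let $A\in \mathbb{Z}^{m\times n}$ be a matrix all of whose (square) subdeterminants belong to $\{0\}\cup \{\pm p^k:k\in \mathbb{Z}_{\ge 0}\}$, and let $b\in \mathbb{Z}^m$. Then $Ax\leq b$ is totally dual $p$-adic.
   Context: A $p$-adic rational is a number $a/p^k$ with $a,k\in\mathbb{Z}$, $k\ge0$; a vector is $p$-adic if all entries are $p$-adic rationals. A system $Ax\le b$ with integral $A,b$ is totally dual $p$-adic if for every $w\in\mathbb{Z}^n$ for which $\min\{b^\top y: A^\top y=w,\ y\ge \mathbf{0}\}$ has an optimal solution, it has a $p$-adic optimal solution. *)

From mathcomp Require Import all_boot all_order all_algebra.
Set Implicit Arguments. Unset Strict Implicit. Unset Printing Implicit Defensive.
Import Order.TTheory GRing.Theory Num.Theory.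
Local Open Scope ring_scope.

Definition padic_rat (p : nat) (q : rat) : Prop :=
  exists (a : int) (k : nat), q = a%:~R / (p%:R ^+ k).

Definition padic_vec (p : nat) (m : nat) (y : 'cV[rat]_m) : Prop :=
  forall i, padic_rat p (y i 0).

Definition subdets_padic_powers (p m n : nat) (A : 'M[int]_(m, n)) : Prop :=
  forall (k : nat) (f : 'I_k -> 'I_m) (g : 'I_k -> 'I_n),
    injective f -> injective g ->
    let d := \det (\matrix_(i < k, j < k) A (f i) (g j)) in
    d = 0 \/ exists e : nat, d = (p ^ e)%:Z \/ d = - (p ^ e)%:Z.

Definition dual_feasible (m n : nat) (A : 'M[int]_(m, n)) (w : 'cV[int]_n)
  (y : 'cV[rat]_m) : Prop :=
  (map_mx intr A)^T *m y = map_mx intr w /\ forall i, 0 <= y i 0.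

Definition dual_obj (m : nat) (b : 'cV[int]_m) (y : 'cV[rat]_m) : rat :=
  \sum_(i < m) (b i 0)%:~R * y i 0.

Definition dual_optimal (m n : nat) (A : 'M[int]_(m, n)) (b : 'cV[int]_m)
  (w : 'cV[int]_n) (y : 'cV[rat]_m) : Prop :=
  dual_feasible A w y /\
  forall z, dual_feasible A w z -> dual_obj b y <= dual_obj b z.

Definition totally_dual_padic (p m n : nat) (A : 'M[int]_(m, n))
  (b : 'cV[int]_m) : Prop :=
  forall w : 'cV[int]_n,
    (exists y, dual_optimal A b w y) ->
    exists y, dual_optimal A b w y /\ padic_vec p y.

(* Take an optimal dual solution y of minimal support. A nonzero z with
   A^T z = 0 supported inside supp y cannot exist: optimality in both directions
   makes the objective constant on the segment of feasible points y + s z, and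
   the endpoint of that segment is optimal with a smaller support. So the rows
   of A indexed by supp y are independent, and y restricted to supp y solves a
   nonsingular square integer system M x = c; by Cramer's rule its entries are
   integers divided by det M = +-p^k. *)

From mathcomp Require Import all_boot all_order all_algebra.
From mathcomp Require Import lra.
From Stdlib Require Import Classical.
Set Implicit Arguments. Unset Strict Implicit. Unset Printing Implicit Defensive.

Import Order.TTheory GRing.Theory Num.Theory.
Local Open Scope ring_scope.

Definition supp (R : nmodType) m (x : 'cV[R]_m) : {set 'I_m} := [set i | x i 0 != 0].

Lemma in_supp (R : nmodType) m (x : 'cV[R]_m) i : (i \in supp x) = (x i 0 != 0).
Proof. by rewrite inE. Qed.

Section Restriction.
Variables (R : pzSemiRingType) (m : nat) (S : {set 'I_m}).
Local Notation f := (enum_val : 'I_#|S| -> 'I_m).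

Lemma mulmx_supp n (M : 'M[R]_(n, m)) (x : 'cV[R]_m) :
  supp x \subset S -> M *m x = colsub f M *m rowsub f x.
Proof.
move=> /subsetP xS; apply/matrixP => i j; rewrite (ord1 j) !mxE.
rewrite -(big_rmcond _ _ (P := mem S)) /= => [|k kS]; last first.
  have /negbNE/eqP -> : ~~ (x k 0 != 0) by rewrite -in_supp; apply: contra kS; exact: xS.
  by rewrite mulr0.
by rewrite big_enum_val; apply: eq_bigr => l _; rewrite !mxE.
Qed.

Lemma rowsub_colsub1 : rowsub f (colsub f 1%:M) = 1%:M :> 'M[R]_#|S|.
Proof. by apply/matrixP => l l'; rewrite !mxE (inj_eq enum_val_inj). Qed.

Lemma colsub_inj_mul n (M : 'M[R]_(n, m)) :
  (forall z : 'cV_m, M *m z = 0 -> supp z \subset S -> z = 0) ->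
  forall u : 'cV_#|S|, colsub f M *m u = 0 -> u = 0.
Proof.
move=> M_inj u Mu0; set z := colsub f 1%:M *m u.
have zS : supp z \subset S.
  apply/subsetP => i; rewrite in_supp mxE; apply: contraR => iS.
  apply/eqP/big1 => l _; rewrite !mxE.
  by case: eqP => [ifl|_]; [move: iS; rewrite ifl enum_valP | rewrite mul0r].
have z0 : z = 0 by apply: M_inj; rewrite // /z mulmxA mulmx_colsub mulmx1.
have <- : rowsub f z = u by rewrite -mul_rowsub_mx rowsub_colsub1 mul1mx.
by rewrite z0; apply/matrixP => l j; rewrite !mxE.
Qed.

End Restriction.

Lemma cramer_int k (M : 'M[int]_k) (c : 'cV[int]_k) (x : 'cV[rat]_k) :
  \det M != 0 -> map_mx intr M *m x = map_mx intr c ->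
  forall i, x i 0 = ((\adj M *m c) i 0)%:~R / (\det M)%:~R.
Proof.
move=> detM0 Mx i.
have Mu : map_mx (intr : int -> rat) M \in unitmx.
  by rewrite unitmxE det_map_mx unitfE intr_eq0.
have -> : x = invmx (map_mx intr M) *m map_mx intr c by rewrite -Mx mulKmx.
by rewrite /invmx Mu det_map_mx -map_mx_adj -scalemxAl -map_mxM !mxE mulrC.
Qed.

Lemma padic_rat_div_pow p (a d : int) :
  (exists e, d = (p ^ e)%:Z \/ d = - (p ^ e)%:Z) -> padic_rat p (a%:~R / d%:~R).
Proof.
case=> e [->|->]; [exists a, e | exists (- a), e].
  by congr (_ / _); exact: natrX.
by rewrite rmorphN invrN mulrN -mulNr -rmorphN; congr (_ / _); exact: natrX.
Qed.

Lemma min_ratio (R : realFieldType) m (y z : 'cV[R]_m) :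
  (forall i, 0 <= y i 0) -> z != 0 ->
  exists i0 t, [/\ z i0 0 != 0, 0 <= t, y i0 0 = t * `|z i0 0| &
    forall s i, `|s| <= t -> 0 <= (y + s *: z) i 0].
Proof.
move=> y_ge0 z0.
have [i1 zi1] : exists i, z i 0 != 0.
  apply/existsP; apply: contraR z0 => /existsPn zi0.
  by apply/eqP/matrixP => i j; rewrite (ord1 j) mxE; apply/eqP/negbNE.
have [i0 zi0 ratio_min] :=
  arg_minP (fun i => y i 0 / `|z i 0|) (P := fun i => z i 0 != 0) zi1.
exists i0, (y i0 0 / `|z i0 0|); split => //.
- by rewrite divr_ge0.
- by rewrite divfK ?normr_eq0.
move=> s i s_le; rewrite !mxE.
have ratio_le : y i0 0 / `|z i0 0| * `|z i 0| <= y i 0.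
  have [-> | zi] := eqVneq (z i 0) 0; first by rewrite normr0 mulr0.
  by rewrite -ler_pdivlMr ?normr_gt0 // ratio_min.
have := ler_wpM2r (normr_ge0 (z i 0)) s_le.
have : - (s * z i 0) <= `|s| * `|z i 0| by rewrite -normrM ler_normr lexx orbT.
lra.
Qed.

Lemma dual_obj_line m (b : 'cV[int]_m) (y z : 'cV[rat]_m) t :
  dual_obj b (y + t *: z) = dual_obj b y + t * dual_obj b z.
Proof.
rewrite /dual_obj mulr_sumr -big_split; apply: eq_bigr => i _.
by rewrite !mxE mulrDr mulrCA.
Qed.

Section Dual.
Variables (m n : nat) (A : 'M[int]_(m, n)) (b : 'cV[int]_m) (w : 'cV[int]_n).
Local Notation Aq := (map_mx (intr : int -> rat) A).

Definition basic (y : 'cV[rat]_m) :=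
  forall z, Aq^T *m z = 0 -> supp z \subset supp y -> z = 0.

Lemma dual_optimal_line (y z : 'cV[rat]_m) t :
  dual_optimal A b w y -> Aq^T *m z = 0 -> 0 < t ->
  (forall s i, `|s| <= t -> 0 <= (y + s *: z) i 0) ->
  forall s, `|s| <= t -> dual_optimal A b w (y + s *: z).
Proof.
move=> [[Ay y_ge0] y_opt] Az t_gt0 line_ge0.
have feas s : `|s| <= t -> dual_feasible A w (y + s *: z).
  by split=> [|i]; [rewrite mulmxDr -scalemxAr Az scaler0 addr0 | exact: line_ge0].
have obj_z0 : dual_obj b z = 0.
  have t_le : `|t| <= t by rewrite gtr0_norm.
  have := y_opt _ (feas t t_le); have := y_opt _ (feas (- t) _).
  rewrite normrN !dual_obj_line => /(_ t_le) obj_le1 obj_le2.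
  have /eqP : t * dual_obj b z = 0 by lra.
  by rewrite mulf_eq0 gt_eqF //= => /eqP.
move=> s s_le; split; first exact: feas.
by move=> y' y'_feas; rewrite dual_obj_line obj_z0 mulr0 addr0; apply: y_opt.
Qed.

Lemma dual_optimal_shrink (y z : 'cV[rat]_m) :
  dual_optimal A b w y -> z != 0 -> Aq^T *m z = 0 -> supp z \subset supp y ->
  exists2 y', dual_optimal A b w y' & (#|supp y'| < #|supp y|)%N.
Proof.
move=> y_opt z0 Az /subsetP zy.
have [i0 [t [zi0 t_ge0 yi0 line_ge0]]] := min_ratio y_opt.1.2 z0.
have yi0_neq0 : y i0 0 != 0 by rewrite -in_supp zy ?in_supp.
have t_gt0 : 0 < t.
  by rewrite lt_def t_ge0 andbT; apply: contraNneq yi0_neq0 => t0; rewrite yi0 t0 mul0r.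
(* the sign makes s * z i0 0 = - y i0 0, so coordinate i0 leaves the support *)
set s := - t * Num.sg (z i0 0).
have s_le : `|s| <= t by rewrite normrM normrN normr_sg zi0 mulr1 ger0_norm.
exists (y + s *: z); first exact: dual_optimal_line y_opt Az t_gt0 line_ge0 _ s_le.
apply: proper_card; apply/properP; split.
  apply/subsetP => i; rewrite !in_supp !mxE; apply: contraNneq => yi.
  have : i \notin supp z by apply: contra (zy i) _; rewrite in_supp yi eqxx.
  by rewrite in_supp negbK yi => /eqP ->; rewrite mulr0 addr0.
exists i0; rewrite in_supp // negbK !mxE yi0 /s.
by rewrite !mulNr -mulrA -normrEsg addrN.
Qed.

Lemma basic_dual_feasible_padic p (y : 'cV[rat]_m) :
  subdets_padic_powers p A -> dual_feasible A w y -> basic y -> padic_vec p y.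
Proof.
move=> A_subdets [Ay y_ge0] y_basic.
pose f := enum_val : 'I_#|supp y| -> 'I_m.
pose N := colsub f Aq^T.
have N_inj : forall u, N *m u = 0 -> u = 0 := colsub_inj_mul y_basic.
have N_full : row_full N.
  rewrite /row_full -mxrank_tr; apply: inj_row_free => v vN0.
  apply: trmx_inj; rewrite trmx0; apply: N_inj.
  by rewrite -[N]trmxK -trmx_mul vN0 trmx0.
pose g := fullrankfun N_full.
pose M : 'M[int]_#|supp y| := \matrix_(i, j) A (f j) (g i).
have ME : map_mx intr M = rowsub g N by apply/matrixP => i j; rewrite !mxE.
have My : map_mx intr M *m rowsub f y = map_mx intr (rowsub g w).
  rewrite ME mul_rowsub_mx -mulmx_supp // Ay.
  by apply/matrixP => i j; rewrite !mxE.
have detM0 : \det M != 0.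
  by rewrite -(intr_eq0 rat) -det_map_mx -unitfE -unitmxE ME fullrowsub_unit.
have detM_tr : \det M = \det (\matrix_(i, j) A (f i) (g j)).
  by rewrite -det_tr; congr (\det _); apply/matrixP => i j; rewrite !mxE.
have detM_pow : exists e, \det M = (p ^ e)%:Z \/ \det M = - (p ^ e)%:Z.
  have g_inj : injective g := @fullrankfun_inj _ _ _ _ N_full.
  rewrite detM_tr; have [d0|//] := A_subdets _ f g enum_val_inj g_inj.
  by move: detM0; rewrite detM_tr d0 eqxx.
move=> i; have [iS | iS] := boolP (i \in supp y); last first.
  by exists 0, 0%N; move: iS; rewrite in_supp negbK => /eqP ->; rewrite mul0r.
have -> : y i 0 = rowsub f y (enum_rank_in iS i) 0 by rewrite mxE /f enum_rankK_in.
by rewrite (cramer_int detM0 My); exact: padic_rat_div_pow detM_pow.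
Qed.

Lemma exists_basic_dual_optimal (y : 'cV[rat]_m) :
  dual_optimal A b w y -> exists2 y', dual_optimal A b w y' & basic y'.
Proof.
have [N] := ubnP #|supp y|; elim: N y => // N IH y supp_lt y_opt.
have [[z [z0 Az zy]] | no_dir] :=
  classic (exists z, [/\ z != 0, Aq^T *m z = 0 & supp z \subset supp y]).
  have [y' y'_opt supp_y'_lt] := dual_optimal_shrink y_opt z0 Az zy.
  exact: IH y' (leq_trans supp_y'_lt supp_lt) y'_opt.
exists y => // z Az zy; have [// | z0] := eqVneq z 0.
by case: no_dir; exists z.
Qed.

End Dual.

Theorem theorem1p7 (p m n : nat) (A : 'M[int]_(m, n)) (b : 'cV[int]_m) :
  prime p -> subdets_padic_powers p A -> totally_dual_padic p A b.
Proof.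
move=> _ A_subdets w [y y_opt].
have [y' y'_opt y'_basic] := exists_basic_dual_optimal y_opt.
by exists y'; split; last exact: basic_dual_feasible_padic A_subdets y'_opt.1 y'_basic.
Qed.
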